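(* Let $\mathcal{P}$ be a nonempty finite poset, $m=\max_{p\in\mathcal{P}}(|{\downarrow}p|+|{\uparrow}p|)$, and let $\mathcal{A},\mathcal{B}$ be nonempty dual families of downsets over $\mathcal{L}(\mathcal{P})$, with $N=|\mathcal{A}|+|\mathcal{B}|$. Then at least one of the following holds: (i) there is $p\in\mathcal{P}$ with $\mathrm{freq}_{\mathcal{A}}(p)\ge\frac{1}{m\log_{4/3}N}$; (ii) there is $p\in\mathcal{P}$ with $\mathrm{freq}_{\overline{\mathcal{B}}}(p)\ge\frac{1}{m^2\log_{4/3}N}$.
   Context: For a finite poset $\mathcal{P}$, $\mathcal{L}(\mathcal{P})$ is the lattice of all downsets of $\mathcal{P}$ ordered by inclusion. ${\downarrow}p=\{q:q\le p\}$, ${\uparrow}p=\{q:q\ge p\}$. Two families $\mathcal{A},\mathcal{B}$ of downsets of $\mathcal{P}$ are dual over $\mathcal{L}(\mathcal{P})$ if $A\not\subseteq B$ for all $A\in\mathcal{A},B\in\mathcal{B}$, and for every downset $X$ of $\mathcal{P}$ either $X\subseteq B$ for some $B\in\mathcal{B}$ or $A\subseteq X$ for some $A\in\mathcal{A}$. For a family $\mathcal{C}$ of subsets of $\mathcal{P}$, $\mathrm{freq}_{\mathcal{C}}(p)=|\{C\in\mathcal{C}:p\in C\}|/|\mathcal{C}|$, and $\overline{\mathcal{C}}=\{\mathcal{P}\setminus C: C\in\mathcal{C}\}$, so $\mathrm{freq}_{\overline{\mathcal{B}}}(p)=|\{B\in\mathcal{B}:p\notin B\}|/|\mathcal{B}|$.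 *)

From HB Require Import structures.
From mathcomp Require Import all_boot all_order.
From Stdlib Require Import Reals.
Set Implicit Arguments. Unset Strict Implicit. Unset Printing Implicit Defensive.
Import Order.TTheory.

Definition is_downset (d : Order.disp_t) (T : finPOrderType d) (X : {set T}) : Prop :=
  forall x y : T, (y <= x)%O -> x \in X -> y \in X.

Definition dual_families (d : Order.disp_t) (T : finPOrderType d)
    (A B : {set {set T}}) : Prop :=
  (forall X Y, X \in A -> Y \in B -> ~~ (X \subset Y)) /\
  (forall X : {set T}, is_downset X ->
     (exists2 Y, Y \in B & X \subset Y) \/ (exists2 Z, Z \in A & Z \subset X)).

Definition updown_size (d : Order.disp_t) (T : finPOrderType d) (p : T) : nat :=
  (#|[set q : T | (q <= p)%O]| + #|[set q : T | (p <= q)%O]|)%N.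

Definition max_updown (d : Order.disp_t) (T : finPOrderType d) : nat :=
  (\max_(p : T) updown_size p)%N.

Definition freq (T : finType) (C : {set {set T}}) (p : T) : R :=
  (INR #|[set X in C | p \in X]| / INR #|C|)%R.

Definition compl_family (T : finType) (C : {set {set T}}) : {set {set T}} :=
  [set ~: X | X in C].

Definition log43 (x : R) : R := (ln x / ln (4/3))%R.

(* Keep each point of P independently with probability r = 2^(-1/m) and let U
   be the largest upset inside the kept set H.  Its complement is a downset, so
   by duality either it lies in some Y in B, which forces P \ Y into H, or it
   contains some X in A, so that no point of X has its upset inside H.
   If every P \ Y (Y in B) had more than m log N points and every X in A more
   than m^2 log N points, the first event would have probability r^|P \ Y| < 1/N;
   greedily picking more than log N points of X with pairwise disjoint upsets
   (each of size at most m), the second would have probability at most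
   (1 - r^m)^(log N) < 1/N.  The union bound over these N events then contradicts
   the fact that one of them always occurs.  The frequency bounds follow by
   double counting, as every member of A meets the complement of every member
   of B. *)

From Stdlib Require Import Reals Lra.
From mathcomp Require Import all_boot all_order all_algebra.
From mathcomp Require Import Rstruct.
Set Implicit Arguments. Unset Strict Implicit. Unset Printing Implicit Defensive.
Import Order.TTheory GRing.Theory Num.Theory.
Delimit Scope R_scope with R.

Section BernoulliProduct.
Variables (R : comPzRingType) (T : finType) (r : R).
Local Open Scope ring_scope.

Definition bernoulli_mass (H : {set T}) : R :=
  \prod_t (if t \in H then r else 1 - r).

Definition expect (f : {set T} -> R) : R := \sum_H bernoulli_mass H * f H.

Definition ignores (S : {set T}) (f : {set T} -> R) : Prop :=
  forall H, f H = f (H :\: S).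

Lemma expect1 : expect (fun=> 1) = 1.
Proof.
have -> : expect (fun=> 1)
          = \sum_(f : {ffun T -> bool}) \prod_t (if f t then r else 1 - r).
  rewrite /expect (reindex (fun f : {ffun T -> bool} => [set t | f t])) /=.
    by apply: eq_bigr => f _; rewrite mulr1; apply: eq_bigr => t _; rewrite inE.
  exists (fun H : {set T} => [ffun t => t \in H]) => [f _ | H _].
    by apply/ffunP => t; rewrite ffunE inE.
  by apply/setP => t; rewrite !inE ffunE.
rewrite -(bigA_distr_bigA (fun (t : T) (b : bool) => if b then r else 1 - r)) /=.
by apply: big1 => t _; rewrite big_bool /= subrKC.
Qed.


Lemma ignoresS (S S' : {set T}) (f : {set T} -> R) :
  S' \subset S -> ignores S f -> ignores S' f.
Proof.
move=> sS'S fS H; rewrite [RHS]fS fS setDDl.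
by congr (f (_ :\: _)); apply/esym/setUidPr.
Qed.

Definition toggle (t : T) (H : {set T}) : {set T} :=
  if t \in H then H :\ t else t |: H.

Lemma toggleK t : involutive (toggle t).
Proof.
move=> H; rewrite /toggle; case tH: (t \in H); rewrite !inE ?eqxx /=.
  by rewrite setD1K.
by rewrite setU1K // tH.
Qed.

Lemma toggleD1 t H : toggle t H :\ t = H :\ t.
Proof.
rewrite /toggle; case: ifP => _; first by rewrite setDDl setUid.
by apply/setP => x; rewrite !inE; case: (x == t).
Qed.

Lemma mem_toggle t H : (t \in toggle t H) = (t \notin H).
Proof. by rewrite /toggle; case: ifP => tH; rewrite !inE ?eqxx ?tH. Qed.

Lemma in_toggle_neq t s H : s != t -> (s \in toggle t H) = (s \in H).
Proof. by move=> st; rewrite /toggle; case: (t \in H); rewrite !inE (negbTE st). Qed.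

Lemma expect_mem_mul t (f : {set T} -> R) : ignores [set t] f ->
  expect (fun H => f H * (t \in H)%:R) = r * expect f.
Proof.
move=> ft.
pose g (H : {set T}) := \prod_(s | s != t) (if s \in H then r else 1 - r) * f H.
have massE (H : {set T}) :
    bernoulli_mass H * f H = (if t \in H then r else 1 - r) * g H.
  by rewrite /bernoulli_mass (bigD1 t) //= -mulrA.
have g_toggle (H : {set T}) : g (toggle t H) = g H.
  rewrite /g [f H]ft [f (toggle t H)]ft toggleD1; congr (_ * _).
  by apply: eq_bigr => s st; rewrite in_toggle_neq.
have g_out : \sum_(H : {set T} | t \notin H) g H = \sum_(H : {set T} | t \in H) g H.
  rewrite (reindex_inj (inv_inj (toggleK t))) /=.
  by apply: eq_big => H; [rewrite mem_toggle negbK | rewrite g_toggle].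
have -> : expect f = \sum_(H : {set T} | t \in H) g H.
  rewrite /expect (bigID (fun H : {set T} => t \in H)) /=.
  rewrite (eq_bigr (fun H => r * g H)); last by move=> H tH; rewrite massE tH.
  rewrite [X in _ + X](eq_bigr (fun H => (1 - r) * g H)); last first.
    by move=> H tH; rewrite massE (negbTE tH).
  by rewrite -!mulr_sumr g_out -mulrDl subrKC mul1r.
rewrite /expect (bigID (fun H : {set T} => t \in H)) /= [X in _ + X]big1; last first.
  by move=> H tH; rewrite (negbTE tH) !mulr0.
by rewrite addr0 mulr_sumr; apply: eq_bigr => H tH; rewrite tH mulr1 massE tH.
Qed.

Lemma expect_subset_mul S (f : {set T} -> R) : ignores S f ->
  expect (fun H => f H * (S \subset H)%:R) = r ^+ #|S| * expect f.
Proof.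
have [n] := ubnP #|S|; elim: n S f => // n IH S f ltSn fS.
have [-> | [t tS]] := set_0Vmem S.
  by rewrite cards0 mul1r; apply: eq_bigr => H _; rewrite sub0set mulr1.
pose S' := S :\ t.
pose f' H := f H * (S' \subset H)%:R.
have f't : ignores [set t] f'.
  move=> H; rewrite /f' -(ignoresS _ fS) ?sub1set //.
  by rewrite subsetD1 !inE eqxx andbT.
have -> : expect (fun H => f H * (S \subset H)%:R)
          = expect (fun H => f' H * (t \in H)%:R).
  apply: eq_bigr => H _; rewrite -(setD1K tS) subUset sub1set -/S' /f'.
  by case: (t \in H); case: (S' \subset H); rewrite ?mulr1 ?mulr0.
rewrite expect_mem_mul // (cardsD1 t S) tS exprS -mulrA; congr (_ * _).
apply: IH; last exact: ignoresS (subD1set S t) fS.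
by move: ltSn; rewrite (cardsD1 t S) tS.
Qed.

Lemma expectB (f g : {set T} -> R) :
  expect (fun H => f H - g H) = expect f - expect g.
Proof. by rewrite /expect -sumrB; apply: eq_bigr => H _; rewrite mulrBr. Qed.

Lemma expect_sum (I : finType) (P : pred I) (F : I -> {set T} -> R) :
  expect (fun H => \sum_(i | P i) F i H) = \sum_(i | P i) expect (F i).
Proof.
rewrite /expect exchange_big /=; apply: eq_bigr => H _.
by rewrite mulr_sumr.
Qed.

Lemma expect_not_subset_mul S (f : {set T} -> R) : ignores S f ->
  expect (fun H => f H * (1 - (S \subset H)%:R)) = (1 - r ^+ #|S|) * expect f.
Proof.
move=> fS; have -> : expect (fun H => f H * (1 - (S \subset H)%:R))
                  = expect (fun H => f H - f H * (S \subset H)%:R).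
  by apply: eq_bigr => H _; rewrite mulrBr mulr1.
by rewrite expectB expect_subset_mul // mulrBl mul1r.
Qed.

Lemma expect_prod_not_subset (I : finType) (M : {set I}) (U : I -> {set T})
    (f : {set T} -> R) :
  {in M &, forall i j, i != j -> [disjoint U i & U j]} ->
  ignores (\bigcup_(i in M) U i) f ->
  expect (fun H => f H * \prod_(i in M) (1 - (U i \subset H)%:R))
  = \prod_(i in M) (1 - r ^+ #|U i|) * expect f.
Proof.
have [n] := ubnP #|M|; elim: n M f => // n IH M f ltMn disjU fU.
have [-> | [i iM]] := set_0Vmem M.
  by rewrite big_set0 mul1r; apply: eq_bigr => H _; rewrite big_set0 mulr1.
pose M' := M :\ i.
have sM'M : M' \subset M by apply: subsetDl.
pose f' H := f H * \prod_(j in M') (1 - (U j \subset H)%:R).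
have f'i : ignores (U i) f'.
  move=> H; rewrite /f' -(ignoresS _ fU); last exact: bigcup_sup iM.
  congr (_ * _); apply: eq_bigr => j; rewrite !inE => /andP [ji jM].
  by rewrite subsetD disjU // andbT.
have -> : expect (fun H => f H * \prod_(j in M) (1 - (U j \subset H)%:R))
          = expect (fun H => f' H * (1 - (U i \subset H)%:R)).
  rewrite /expect; apply: eq_bigr => H _; congr (_ * _).
  by rewrite /f' (big_setD1 i) //= mulrA mulrAC.
rewrite expect_not_subset_mul // (big_setD1 i) //= -mulrA; congr (_ * _).
apply: IH.
- by move: ltMn; rewrite (cardsD1 i M) iM.
- by move=> j k /(subsetP sM'M) jM /(subsetP sM'M); exact: disjU.
- apply: ignoresS fU; apply/bigcupsP => j jM.
  exact: bigcup_sup (subsetP sM'M j jM).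
Qed.

End BernoulliProduct.

Section BernoulliBounds.
Variables (R : realDomainType) (T : finType) (r : R).
Local Open Scope ring_scope.
Hypotheses (r_ge0 : 0 <= r) (r_le1 : r <= 1).

Lemma bernoulli_mass_ge0 (H : {set T}) : 0 <= bernoulli_mass r H.
Proof.
by apply: prodr_ge0 => t _; case: (t \in H); rewrite ?subr_ge0.
Qed.

Lemma ler_expect (f g : {set T} -> R) :
  (forall H, f H <= g H) -> expect r f <= expect r g.
Proof.
move=> fg; apply: ler_sum => H _.
by apply: ler_wpM2l; [exact: bernoulli_mass_ge0 | exact: fg].
Qed.

Lemma expect_union_bound (I : finType) (P : pred I) (E : I -> {set T} -> bool) :
  (forall H, exists2 i, P i & E i H) ->
  1 <= \sum_(i | P i) expect r (fun H => (E i H)%:R).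
Proof.
move=> cover; rewrite -expect_sum -[leLHS](expect1 T r).
apply: ler_expect => H; have [i Pi EiH] := cover H.
rewrite (bigD1 i) //= EiH lerDl.
by apply: sumr_ge0 => j _; rewrite ler0n.
Qed.

End BernoulliBounds.

Lemma card_bigcup_le (I T : finType) (P : pred I) (F : I -> {set T}) :
  #|\bigcup_(i | P i) F i| <= \sum_(i | P i) #|F i|.
Proof.
elim/big_rec2: _ => [|i U n _ IH]; first by rewrite cards0.
by rewrite (leq_trans (leq_card_setU _ _)) ?leq_add2l.
Qed.

Section UpCore.
Variables (d : Order.disp_t) (T : finPOrderType d).

Definition upset_of (z : T) : {set T} := [set y | (z <= y)%O].
Definition downset_of (z : T) : {set T} := [set y | (y <= z)%O].
Definition upcore (H : {set T}) : {set T} := [set x | upset_of x \subset H].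

Lemma card_upset_of_le z : #|upset_of z| <= max_updown T.
Proof. exact: leq_trans (leq_addl _ _) (leq_bigmax z). Qed.

Lemma card_downset_of_le z : #|downset_of z| <= max_updown T.
Proof. exact: leq_trans (leq_addr _ _) (leq_bigmax z). Qed.

Lemma max_updown_gt0 : 0 < #|T| -> 0 < max_updown T.
Proof.
case/card_gt0P => z _; apply: leq_trans (card_downset_of_le z).
by apply/card_gt0P; exists z; rewrite inE.
Qed.

Lemma upcore_sub H : upcore H \subset H.
Proof. by apply/subsetP => x; rewrite inE => /subsetP; apply; rewrite inE. Qed.

Lemma is_downset_upcoreC H : is_downset (~: upcore H).
Proof.
move=> x y yx; rewrite !inE; apply: contra => /subsetP upyH.
by apply/subsetP => z; rewrite inE => xz; apply: upyH; rewrite inE (le_trans yx).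
Qed.

Definition disjoint_upsets (M : {set T}) : Prop :=
  {in M &, forall z z', z != z' -> [disjoint upset_of z & upset_of z']}.

Lemma exists_disjoint_upsets (X : {set T}) : exists2 M : {set T},
  M \subset X /\ disjoint_upsets M & #|X| <= #|M| * max_updown T ^ 2.
Proof.
have [n] := ubnP #|X|; elim: n X => // n IH X ltXn.
have [-> | [z zX]] := set_0Vmem X.
  by exists set0; [split=> [|z]; rewrite ?sub0set ?inE | rewrite cards0].
pose C := \bigcup_(w in upset_of z) downset_of w.
have zC : z \in C by apply/bigcupP; exists z; rewrite inE.
have ltXC : #|X :\: C| < #|X|.
  apply: proper_card; rewrite properEneq subsetDl andbT.
  by apply: contraTneq zX => <-; rewrite inE zC.
have [|M [sMXC disjM] leXC] := IH (X :\: C); first by rewrite (leq_trans ltXC) // -ltnS.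
have zM : z \notin M by apply: contraTN zC => /(subsetP sMXC); rewrite inE => /andP [].
exists (z |: M); first split.
- by rewrite subUset sub1set zX (subset_trans sMXC) ?subsetDl.
- have disj_z z' : z' \in M -> [disjoint upset_of z & upset_of z'].
    move=> z'M; rewrite -setI_eq0; apply/eqP/setP => w; rewrite !inE.
    apply/negP => /andP [zw z'w]; have := subsetP sMXC _ z'M.
    by rewrite inE => /andP [/bigcupP []]; exists w; rewrite ?inE.
  move=> u v; rewrite !inE => /predU1P [->|uM] /predU1P [->|vM]; rewrite ?eqxx // => uv.
  + exact: disj_z.
  + by rewrite disjoint_sym; apply: disj_z.
  + exact: disjM.
- have leC : #|C| <= max_updown T ^ 2.
    apply: leq_trans (card_bigcup_le _ _) _.
    apply: (@leq_trans (\sum_(w in upset_of z) max_updown T)).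
      by apply: leq_sum => w _; apply: card_downset_of_le.
    by rewrite sum_nat_const expnS expn1 leq_mul2r card_upset_of_le orbT.
  rewrite cardsU1 zM mulSn -(setID X C) cardsU.
  apply: leq_trans (leq_subr _ _) _.
  apply: leq_add => //.
  exact: leq_trans (subset_leq_card (subsetIr _ _)) leC.
Qed.

End UpCore.

Section UpCoreBounds.
Variables (R : realDomainType) (d : Order.disp_t) (T : finPOrderType d) (r : R).
Local Open Scope ring_scope.
Hypotheses (r_ge0 : 0 <= r) (r_le1 : r <= 1).

Lemma expect_subset_upcoreC (X M : {set T}) : M \subset X -> disjoint_upsets M ->
  expect r (fun H => (X \subset ~: upcore H)%:R)
  <= \prod_(z in M) (1 - r ^+ #|upset_of z|).
Proof.
move=> sMX disjM.
apply: le_trans (_ : expect r (fun H =>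
  1 * \prod_(z in M) (1 - (upset_of z \subset H)%:R)) <= _).
  apply: ler_expect => // H; rewrite mul1r.
  have [XH | _] := boolP (X \subset ~: upcore H); last first.
    by apply: prodr_ge0 => z _; case: (_ \subset _); rewrite ?subr0 ?subrr.
  rewrite big1 // => z zM; have := subsetP XH z (subsetP sMX z zM).
  by rewrite !inE => /negbTE ->; rewrite subr0.
by rewrite expect_prod_not_subset // expect1 mulr1.
Qed.

Lemma expect_upcoreC_subset (Y : {set T}) :
  expect r (fun H => (~: upcore H \subset Y)%:R) <= r ^+ #|~: Y|.
Proof.
apply: le_trans (_ : expect r (fun H => 1 * (~: Y \subset H)%:R) <= _).
  apply: ler_expect => // H; rewrite mul1r -setCS setCK.
  have [YH | //] := boolP (~: Y \subset upcore H).
  by rewrite (subset_trans YH (upcore_sub H)).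
by rewrite expect_subset_mul // expect1 mulr1.
Qed.

End UpCoreBounds.

Lemma Rpower_half_lt_Rinv (N x : R) :
  (1 <= N)%R -> (log43 N < x)%R -> (Rpower (/2) x < / N)%R.
Proof.
rewrite /log43 => N_ge1 ltLx.
have ln43_gt0 : (0 < ln (4/3))%R by rewrite -ln_1; apply: ln_increasing; lra.
have ln43_lt_ln2 : (ln (4/3) < ln 2)%R by apply: ln_increasing; lra.
have lnN_ge0 : (0 <= ln N)%R.
  by case: (Rle_lt_or_eq_dec _ _ N_ge1) => [/(ln_increasing 1) | <-];
    rewrite ln_1; lra.
have lnN_lt : (ln N < x * ln (4/3))%R.
  have lnNE : (ln N = ln N / ln (4/3) * ln (4/3))%R by field; lra.
  nra.
rewrite /Rpower ln_Rinv; last lra.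
rewrite -[X in (_ < / X)%R](exp_ln N); last lra.
rewrite -exp_Ropp; apply: exp_increasing; nra.
Qed.

Local Open Scope ring_scope.

Definition root_half (m : nat) : R := Rpower (/2) (/ INR m).

Lemma root_half_expn m k : root_half m ^+ k = Rpower (/2) (k%:R / m%:R).
Proof.
rewrite -RpowE -Rpower_pow; last exact: exp_pos.
by rewrite /root_half Rpower_mult !INRE RmultE mulrC.
Qed.

Lemma root_half_ge0 m : 0 <= root_half m.
Proof. by apply/RleP/Rlt_le/exp_pos. Qed.

Lemma root_half_expn_m m : (0 < m)%N -> root_half m ^+ m = (/2)%R.
Proof.
move=> m_gt0; rewrite root_half_expn RdivE divff ?pnatr_eq0 -?lt0n //.
by rewrite -R1E Rpower_1; lra.
Qed.

Lemma root_half_le1 m : (0 < m)%N -> root_half m <= 1.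
Proof.
move=> m_gt0; rewrite leNgt; apply/negP => /(exprn_egt1 m).
by rewrite root_half_expn_m // -lt0n m_gt0 => /RltP; rewrite -R1E; lra.
Qed.

Section DualFamilies.
Variables (d : Order.disp_t) (T : finPOrderType d).
Local Notation m := (max_updown T).

Lemma expect_subset_upcoreC_lt (N : R) (X : {set T}) : (0 < m)%N -> 1 <= N ->
  m%:R ^+ 2 * log43 N < #|X|%:R ->
  expect (root_half m) (fun H => (X \subset ~: upcore H)%:R) < N^-1.
Proof.
move=> m_gt0 N_ge1 largeX.
have r_le1 := root_half_le1 m_gt0.
have [M [sMX disjM] leXM] := exists_disjoint_upsets X.
apply: le_lt_trans (expect_subset_upcoreC (root_half_ge0 m) r_le1 sMX disjM) _.
apply: (@le_lt_trans _ _ ((/2)%R ^+ #|M|)).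
  rewrite -prodr_const; apply: ler_prod => z _.
  rewrite subr_ge0 exprn_ile1 ?root_half_ge0 //=.
  apply: le_trans (_ : 1 - root_half m ^+ m <= _).
    by rewrite lerD2l lerN2 ler_wiXn2l ?root_half_ge0 ?card_upset_of_le.
  by rewrite root_half_expn_m // -R1E -RminusE; apply/RleP; lra.
have ltLM : log43 N < #|M|%:R.
  rewrite -(ltr_pM2l (_ : 0 < m%:R ^+ 2)) ?exprn_gt0 ?ltr0n //.
  by apply: lt_le_trans largeX _; rewrite mulrC -natrX -natrM ler_nat.
rewrite -RpowE -Rpower_pow -?INRE; last lra.
apply/RltP; rewrite -RinvE; apply: Rpower_half_lt_Rinv; first exact/RleP.
by rewrite INRE; apply/RltP.
Qed.

Lemma expect_upcoreC_subset_lt (N : R) (Y : {set T}) : (0 < m)%N -> 1 <= N ->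
  m%:R * log43 N < #|~: Y|%:R ->
  expect (root_half m) (fun H => (~: upcore H \subset Y)%:R) < N^-1.
Proof.
move=> m_gt0 N_ge1 largeY.
apply: le_lt_trans (expect_upcoreC_subset (root_half_ge0 m) (root_half_le1 m_gt0) Y) _.
rewrite root_half_expn; apply/RltP; rewrite -RinvE.
apply: Rpower_half_lt_Rinv; first exact/RleP.
by apply/RltP; rewrite RdivE ltr_pdivlMr ?ltr0n // mulrC.
Qed.

Lemma dual_families_not_large (A B : {set {set T}}) :
  (0 < #|T|)%N -> dual_families A B ->
  let L := log43 (#|A| + #|B|)%:R in
  (forall X, X \in A -> m%:R ^+ 2 * L < #|X|%:R) ->
  (forall Y, Y \in B -> m%:R * L < #|~: Y|%:R) -> False.
Proof.
move=> T_gt0 [_ cover] L largeA largeB; have m_gt0 := max_updown_gt0 T_gt0.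
pose N : R := (#|A| + #|B|)%:R.
pose member i := match i with inl X => X \in A | inr Y => Y \in B end.
pose event (i : {set T} + {set T}) (H : {set T}) := match i with
  | inl X => X \subset ~: upcore H | inr Y => ~: upcore H \subset Y end.
have coverH H : exists2 i, member i & event i H.
  have [[Y YB sY] | [X XA sX]] := cover _ (@is_downset_upcoreC _ _ H).
    by exists (inr Y).
  by exists (inl X).
have [i0 member_i0 _] := coverH set0.
have N_ge1 : 1 <= N.
  rewrite ler1n addn_gt0; case: i0 member_i0 => [X|Y] /= ?.
    by apply/orP; left; apply/card_gt0P; exists X.
  by apply/orP; right; apply/card_gt0P; exists Y.
have event_small i :
    member i -> expect (root_half m) (fun H => (event i H)%:R) < N^-1.
  case: i => [X|Y] /= ?.
    by apply: expect_subset_upcoreC_lt; rewrite // largeA.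
  by apply: expect_upcoreC_subset_lt; rewrite // largeB.
have := expect_union_bound (root_half_ge0 m) (root_half_le1 m_gt0) coverH.
apply/negP; rewrite -ltNge; apply: (@lt_le_trans _ _ (\sum_(i | member i) N^-1)).
  by apply: ltr_sum => //; apply/hasP; exists i0; rewrite ?mem_index_enum.
rewrite big_sumType /= !sumr_const -mulrnDr -[_^-1 *+ _]mulr_natr mulVf //.
by rewrite gt_eqF // (lt_le_trans ltr01).
Qed.

Lemma dual_families_small_member (A B : {set {set T}}) :
  (0 < #|T|)%N -> dual_families A B ->
  let L := log43 (#|A| + #|B|)%:R in
  (exists2 X, X \in A & #|X|%:R <= m%:R ^+ 2 * L) \/
  (exists2 Y, Y \in B & #|~: Y|%:R <= m%:R * L).
Proof.
move=> T_gt0 dAB L.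
have [/exists_inP smallA | /exists_inPn largeA] :=
  boolP [exists X in A, #|X|%:R <= m%:R ^+ 2 * L]; first by left.
have [/exists_inP smallB | /exists_inPn largeB] :=
  boolP [exists Y in B, #|~: Y|%:R <= m%:R * L]; first by right.
exfalso; apply: (dual_families_not_large T_gt0 dAB).
  by move=> X /largeA; rewrite ltNge.
by move=> Y /largeB; rewrite ltNge.
Qed.

End DualFamilies.

Lemma freq_transversal (T : finType) (F : {set {set T}}) (S : {set T}) (c : R) :
  (0 < #|F|)%N -> (forall X, X \in F -> ~~ [disjoint X & S]) -> #|S|%:R <= c ->
  exists p, c^-1 <= freq F p.
Proof.
move=> F_gt0 meetS leSc.
have [X0 X0F] := card_gt0P F_gt0; have /pred0Pn [p0 /andP [_ p0S]] := meetS X0 X0F.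
pose deg p := #|[set X in F | p \in X]|.
have degE p : deg p = (\sum_(X in F) (p \in X))%N.
  rewrite /deg -sum1_card big_mkcond [RHS]big_mkcond.
  by apply: eq_bigr => X _; rewrite inE; case: (X \in F).
have [p pS degmax] := arg_maxnP deg p0S.
have S_gt0 : (0 < #|S|)%N by apply/card_gt0P; exists p0.
have le_F_Sdeg : (#|F| <= #|S| * deg p)%N.
  rewrite -sum_nat_const; apply: (@leq_trans (\sum_(q in S) deg q)); last first.
    by apply: leq_sum => q; exact: degmax.
  under eq_bigr do rewrite degE; rewrite exchange_big /= -sum1_card.
  apply: leq_sum => X XF; have /pred0Pn [q /andP [qX qS]] := meetS X XF.
  by rewrite (bigD1 q) //= ltn_addr // lt0b.
exists p; apply: le_trans (_ : #|S|%:R^-1 <= _).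
  by rewrite lef_pV2 ?posrE ?ltr0n // (lt_le_trans _ leSc) ?ltr0n.
rewrite /freq RdivE !INRE ler_pdivlMr ?ltr0n // mulrC ler_pdivrMr ?ltr0n //.
by rewrite -natrM ler_nat mulnC.
Qed.

Theorem corollary4 (d : Order.disp_t) (T : finPOrderType d)
    (A B : {set {set T}}) :
  (0 < #|T|)%N ->
  (forall X, X \in A -> is_downset X) ->
  (forall Y, Y \in B -> is_downset Y) ->
  (0 < #|A|)%N -> (0 < #|B|)%N ->
  dual_families A B ->
  let m := max_updown T in
  let N := (#|A| + #|B|)%N in
  (exists p : T,
      (1 / (INR m * log43 (INR N)) <= freq A p)%R) \/
  (exists p : T,
      (1 / (INR m ^ 2 * log43 (INR N)) <= freq (compl_family B) p)%R).
Proof.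
move=> T_gt0 _ _ A_gt0 B_gt0 dAB m N.
have [[X XA smallX] | [Y YB smallY]] := dual_families_small_member T_gt0 dAB.
- right.
  have compl_gt0 : (0 < #|compl_family B|)%N.
    by rewrite card_imset //; apply: setC_inj.
  have meetX Z : Z \in compl_family B -> ~~ [disjoint Z & X].
    by case/imsetP => Y YB ->; rewrite disjoints_subset setCS dAB.1.
  have [p freq_p] := freq_transversal compl_gt0 meetX smallX.
  by exists p; apply/RleP; rewrite RdivE R1E div1r RmultE RpowE !INRE.
- left.
  have meetY X : X \in A -> ~~ [disjoint X & ~: Y].
    by move=> XA; rewrite disjoints_subset setCK dAB.1.
  have [p freq_p] := freq_transversal A_gt0 meetY smallY.
  by exists p; apply/RleP; rewrite RdivE R1E div1r RmultE !INRE.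
Qed.
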